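(* Let $I\subset[n]$ and $m=\#I$. Then the map $$\mathbb Z_2^m\backslash\mathrm{SPI}_m\to\mathbb Z_2^n\backslash\Omega^I_n/(\mathbb Z_2^n\rtimes\mathfrak S_n),\qquad \tau\mapsto \mathbb Z_2^n\,h(\sigma_I)\begin{pmatrix}\tau&0\\0&\mathbf 1_{n-m}\\\mathbf 1_m&0\\0&0\end{pmatrix}(\mathbb Z_2^n\rtimes\mathfrak S_n)$$ is a well-defined bijection.
   Context: $\mathrm{SPP}_k$: $k\times k$ integer matrices with entries in $\{-1,0,1\}$ and at most one nonzero entry per row and column. $\mathrm{SPI}_m=\mathrm{SPP}_m\cap\mathrm{Sym}_m(\mathbb Z)$; $\varepsilon=\mathrm{diag}(\varepsilon_1,\dots,\varepsilon_m)\in\mathbb Z_2^m=\{\pm1\}^m$ acts on $\mathrm{SPI}_m$ by $\tau\mapsto\varepsilon\tau\varepsilon$. $\Omega^\circ_n$ is the set of $\begin{pmatrix}\tau_1\\\tau_2\end{pmatrix}\in\mathrm M_{2n,n}(\mathbb Z)$ with $\tau_1,\tau_2\in\mathrm{SPP}_n$, $\tau_1^t\tau_2$ symmetric, of rank $n$. For $D\in\mathrm M_n$, $\mathrm{\acute{e}ch}\,D$ is the set of $i\in[n]$ such that the rows $i,\dots,n$ of $D$ have larger rank than rows $i+1,\dots,n$ (the pivot rows of a column echelon form of $D$). $\Omega^I_n=\{\begin{pmatrix}\tau_1\\\tau_2\end{pmatrix}\in\Omega^\circ_n:\mathrm{\acute{e}ch}\,\tau_2=I\}$. $\mathbb Z_2^n$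 acts on the left by $\mathrm{diag}(\varepsilon,\varepsilon)$ and $\mathbb Z_2^n\rtimes\mathfrak S_n$ (signed permutation matrices) by right multiplication; $\Omega^I_n$ is stable. For $I=\{i_1<\dots<i_m\}$, $[n]\setminus I=\{i'_1<\dots<i'_{n-m}\}$, $\sigma_I\in\mathfrak S_n$ sends $k\mapsto i_k$ ($k\le m$), $m+k\mapsto i'_k$, viewed as the permutation matrix with $\sigma e_i=e_{\sigma(i)}$, and $h(\sigma_I)=\mathrm{diag}(\sigma_I,\sigma_I)$. *)

From HB Require Import structures.
From mathcomp Require Import all_boot all_order all_algebra all_fingroup.
Set Implicit Arguments. Unset Strict Implicit. Unset Printing Implicit Defensive.
Import Order.TTheory GRing.Theory Num.Theory.
Local Open Scope ring_scope.

(* Matrices are integer matrices; indices are 0-based: [n] = 'I_n. *)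

Definition SPP (p q : nat) (A : 'M[int]_(p, q)) : bool :=
  [forall i, forall j, (A i j == 0) || (A i j == 1) || (A i j == -1)] &&
  [forall i, forall j, forall k, ((A i j != 0) && (A i k != 0)) ==> (j == k)] &&
  [forall j, forall i, forall k, ((A i j != 0) && (A k j != 0)) ==> (i == k)].

Definition SPI (m : nat) (t : 'M[int]_m) : bool := SPP t && (t^T == t).

(* signed permutation matrices = elements of Z_2^n ⋊ S_n:
   SPP matrices with exactly one nonzero entry in every row *)
Definition signed_perm (n : nat) (P : 'M[int]_n) : bool :=
  SPP P && [forall i, exists j, P i j != 0].

Definition sign_vec (n : nat) (e : 'rV[int]_n) : bool :=
  [forall i, (e 0 i == 1) || (e 0 i == -1)].

Definition qrank (p q : nat) (A : 'M[int]_(p, q)) : nat :=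
  \rank (map_mx (fun x : int => (x%:~R : rat)) A).

Definition rows_from (p q : nat) (D : 'M[int]_(p, q)) (i : nat) : 'M[int]_(p, q) :=
  \matrix_(j, k) (if (i <= j)%N then D j k else 0).

Definition ech (n : nat) (D : 'M[int]_n) : {set 'I_n} :=
  [set i : 'I_n | (qrank (rows_from D i.+1) < qrank (rows_from D i))%N].

Definition Omega0 (n : nat) (X : 'M[int]_(n + n, n)) : bool :=
  SPP (usubmx X) && SPP (dsubmx X) &&
  (((usubmx X)^T *m dsubmx X)^T == (usubmx X)^T *m dsubmx X) &&
  (qrank X == n).

Definition OmegaI (n : nat) (I : {set 'I_n}) (X : 'M[int]_(n + n, n)) : bool :=
  Omega0 X && (ech (dsubmx X) == I).

(* Z_2^n \ . / (Z_2^n ⋊ S_n) double-coset relation: Y = diag(e,e) X P *)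
Definition dcoset_rel (n : nat) (X Y : 'M[int]_(n + n, n)) : Prop :=
  exists (e : 'rV[int]_n) (P : 'M[int]_n),
    [/\ sign_vec e, signed_perm P &
        Y = block_mx (diag_mx e) 0 0 (diag_mx e) *m X *m P].

(* Z_2^m \ SPI_m orbit relation: t' = e t e *)
Definition sign_conj_rel (m : nat) (t t' : 'M[int]_m) : Prop :=
  exists e : 'rV[int]_m, sign_vec e /\ t' = diag_mx e *m t *m diag_mx e.

(* sigma_I : k -> i_k (k < m), m + k -> i'_k, with I = {i_0 < ... < i_{m-1}}
   and [n]\I = {i'_0 < ... }; enum over 'I_n is increasing. *)
Definition sigmaI (n : nat) (I : {set 'I_n}) (k : 'I_n) : 'I_n :=
  if (k < #|I|)%N then nth k (enum I) k else nth k (enum (~: I)) (k - #|I|).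

(* permutation matrix of sigma with sigma e_i = e_{sigma i} *)
Definition pmx (n : nat) (s : 'I_n -> 'I_n) : 'M[int]_n :=
  \matrix_(i, j) ((i == s j)%:R).

(* entry (i,j) of t : 'M_m, seen inside the top-left corner (0 outside) *)
Definition ext (m : nat) (t : 'M[int]_m) (i j : nat) : int :=
  match @insub nat (fun k => (k < m)%N) 'I_m i, @insub nat (fun k => (k < m)%N) 'I_m j with
  | Some i', Some j' => t i' j'
  | _, _ => 0
  end.

(* the 2n x n matrix  [[t, 0], [0, 1_{n-m}], [1_m, 0], [0, 0]] *)
Definition blockM (n m : nat) (t : 'M[int]_m) : 'M[int]_(n + n, n) :=
  col_mx
    (\matrix_(i < n, j < n)
       (if (i < m)%N && (j < m)%N then ext t i j
        else ((m <= i)%N && (i == j :> nat))%:R))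
    (\matrix_(i < n, j < n) (((i < m)%N && (i == j :> nat))%:R)).

Definition PhiI (n : nat) (I : {set 'I_n}) (t : 'M[int]_#|I|) : 'M[int]_(n + n, n) :=
  block_mx (pmx (sigmaI I)) 0 0 (pmx (sigmaI I)) *m blockM n t.

(* Conjugation by h(sigma_I), where sigma_I is a genuine permutation, carries Omega^I_n onto
   Omega^[0,m)_n, so it suffices to treat I = [0, m), where Phi(tau) is the block matrix
   [blockM n tau] = (tau (+) 1_(n-m) ; 1_m (+) 0).
   Surjectivity: for X = (T1; T2) in Omega^[0,m)_n, the symmetry of T1^T T2 makes T1 vanish
   on the rows < m of every column where T2 vanishes, so by full rank the matrix R made of
   the rows < m of T2 and the other rows of T1 has a nonzero entry in each column; it is
   therefore a signed permutation matrix, and X = blockM tau * R for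
   tau_ab = T1_(a, c b) * R_(b, c b), c b being the column of the nonzero entry of row b
   of R.  This tau is symmetric because T1^T T2 is.
   Injectivity: in diag(e, e) * blockM tau * P = blockM tau', the lower block 1_m (+) 0
   forces the first m rows of P to be those of diag(e), so tau' = e tau e. *)

From mathcomp Require Import all_boot all_order all_algebra all_fingroup.
Set Implicit Arguments. Unset Strict Implicit. Unset Printing Implicit Defensive.
Import Order.TTheory GRing.Theory Num.Theory.
Local Open Scope ring_scope.

Definition is_sign (x : int) : bool := (x == 1) || (x == -1).

Lemma is_sign_sqr x : is_sign x -> x * x = 1.
Proof. by case/orP => /eqP ->. Qed.

Lemma is_sign_neq0 x : is_sign x -> x != 0.
Proof. by case/orP => /eqP ->. Qed.

Lemma is_signM x y : is_sign x -> is_sign y -> is_sign (x * y).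
Proof. by do 2 case/orP => /eqP ->. Qed.

Lemma natr_bool_neq0 (b : bool) : ((b%:R : int) != 0) = b.
Proof. by case: b. Qed.

Lemma SPPP p q (A : 'M[int]_(p, q)) : reflect
  [/\ forall i j, A i j != 0 -> is_sign (A i j),
      forall i j k, A i j != 0 -> A i k != 0 -> j = k &
      forall j i k, A i j != 0 -> A k j != 0 -> i = k] (SPP A).
Proof.
apply: (iffP idP) => [/andP[/andP[/'forall_forallP sgA /'forall_'forall_forallP rowA]
                       /'forall_'forall_forallP colA]|[sgA rowA colA]].
  split=> [i j Aij|i j k Aij Aik|j i k Aij Akj].
  - by move: (sgA i j); rewrite (negbTE Aij).
  - by apply/eqP/(implyP (rowA i j k)); rewrite Aij.
  - by apply/eqP/(implyP (colA j i k)); rewrite Aij.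
apply/andP; split; [apply/andP; split|].
- apply/'forall_forallP => i j; case: eqP => //= /eqP /sgA.
  by rewrite /is_sign => ->.
- apply/'forall_'forall_forallP => i j k; apply/implyP => /andP[Aij Aik].
  by rewrite (rowA _ _ _ Aij Aik).
- apply/'forall_'forall_forallP => j i k; apply/implyP => /andP[Aij Akj].
  by rewrite (colA _ _ _ Aij Akj).
Qed.

Lemma mulmx_entry1 (R : pzSemiRingType) p q r (A : 'M[R]_(p, q)) (B : 'M[R]_(q, r))
    i j l :
  (forall l', l' != l -> A i l' * B l' j = 0) -> (A *m B) i j = A i l * B l j.
Proof. by move=> AB0; rewrite mxE (bigD1 l) //= big1 ?addr0 // => l' /AB0. Qed.

Lemma mulmx_SPP_col p q (A : 'M[int]_(p, q)) (B : 'M[int]_q) i j l :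
  SPP B -> B l j != 0 -> (A *m B) i j = A i l * B l j.
Proof.
case/SPPP=> _ _ colB Blj; apply: mulmx_entry1 => l' l'l.
have [->|nz] := eqVneq (B l' j) 0; first by rewrite mulr0.
by rewrite (colB _ _ _ nz Blj) eqxx in l'l.
Qed.

Lemma ech_SPP n (D : 'M[int]_n) : SPP D -> ech D = [set i | [exists j, D i j != 0]].
Proof.
case/SPPP => _ _ colD; apply/setP => i; rewrite !inE /qrank.
case: existsP => [[c Dic]|D0].
- apply: rank_ltmx; rewrite ltmxE; apply/andP; split.
  + have -> : map_mx intr (rows_from D i.+1) =
       diag_mx (\row_r ((i < r)%N%:R)) *m map_mx intr (rows_from D i) :> 'M[rat]_n.
      apply/matrixP => r j; rewrite mul_diag_mx !mxE.
      by case: ltnP => [/ltnW ->|_]; rewrite ?mul1r ?mul0r.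
    exact: submxMl.
  + apply/negP => /(submx_trans (row_sub i _)) /submxP [u hu].
    have := congr1 (fun M : 'M[rat]_(1, n) => M 0 c) hu; rewrite !mxE leqnn big1.
      by move/eqP; rewrite intr_eq0 (negbTE Dic).
    move=> r _; rewrite !mxE; case: ltnP => [ir|]; last by rewrite mulr0.
    have -> : D r c = 0.
      by apply/eqP/negP => /negP/colD/(_ Dic) ri; rewrite ri ltnn in ir.
    by rewrite mulr0.
- have -> : rows_from D i.+1 = rows_from D i; last by rewrite ltnn.
  apply/matrixP => r j; rewrite !mxE; case: (ltngtP i r) => // /ord_inj <-.
  by have [//|Dij] := eqVneq (D i j) 0; case: D0; exists j.
Qed.

Lemma qrank_mul_le p q r (A : 'M[int]_(p, q)) (X : 'M[int]_(q, r)) :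
  (qrank (A *m X) <= qrank X)%N.
Proof. by rewrite /qrank map_mxM mxrankM_maxr. Qed.

Lemma qrank_linv p q (A : 'M[int]_(q, p)) (X : 'M[int]_(p, q)) :
  A *m X = 1%:M -> qrank X = q.
Proof.
move=> AX; apply/eqP; rewrite eqn_leq rank_leq_col /=.
by rewrite -{1}(mxrank1 rat q) -(map_mx1 intr) -AX qrank_mul_le.
Qed.

Lemma qrank_col_neq0 p q (A : 'M[int]_(p, q)) j :
  qrank A = q -> exists i, A i j != 0.
Proof.
move=> rkA; case: (pickP (fun i => A i j != 0)) => [i Aij|A0]; first by exists i.
have Afree : row_free ((map_mx intr A)^T : 'M[rat]_(q, p)).
  by rewrite /row_free mxrank_tr -[X in _ == X]rkA.
have : row j ((map_mx intr A)^T : 'M[rat]_(q, p)) = 0.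
  by apply/rowP => k; rewrite !mxE; move/negbFE/eqP: (A0 k) => ->.
rewrite rowE -(mul0mx _ (map_mx intr A)^T) => /(row_free_inj Afree)/matrixP/(_ 0 j).
by rewrite !mxE !eqxx => /eqP; rewrite oner_eq0.
Qed.

Lemma signed_perm_of_cols n (R : 'M[int]_n) :
    (forall i j, R i j != 0 -> is_sign (R i j)) ->
    (forall i j k, R i j != 0 -> R i k != 0 -> j = k) ->
    (forall j, exists i, R i j != 0) ->
  signed_perm R.
Proof.
move=> sgR rowR colR.
pose piv j := odflt j [pick i | R i j != 0].
have Rpiv j : R (piv j) j != 0.
  by rewrite /piv; case: pickP => //= R0; have [i] := colR j; rewrite R0.
have piv_inj : injective piv by move=> j k pivE; apply: rowR (Rpiv j) _; rewrite pivE.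
pose s := perm piv_inj.
have Rrow i : R i ((s^-1)%g i) != 0 by rewrite -{1}(permKV s i) permE.
apply/andP; split; last by apply/forallP => i; apply/existsP; exists ((s^-1)%g i).
have pivE i j : R i j != 0 -> piv j = i.
  by move=> Rij; rewrite (rowR _ _ _ Rij (Rrow i)) -permE permKV.
apply/SPPP; split=> // j i k Rij Rkj.
by rewrite -(pivE _ _ Rij) -(pivE _ _ Rkj).
Qed.

Lemma signed_perm_diag n (e : 'rV[int]_n) : sign_vec e -> signed_perm (diag_mx e).
Proof.
move/forallP=> sg_e; apply: signed_perm_of_cols => [i j|i j k|j].
- rewrite mxE; case: (eqVneq i j) => [->|_]; rewrite ?mulr0n ?eqxx // mulr1n.
  by move=> _; apply: sg_e.
- by rewrite !mxE; case: (eqVneq i j) => [<-|_]; case: (eqVneq i k) => [<-|_];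
    rewrite ?mulr0n ?eqxx.
- by exists j; rewrite mxE eqxx mulr1n is_sign_neq0 //; apply: sg_e.
Qed.

Lemma diag_mulE n p (e : 'rV[int]_n) (A : 'M[int]_(n, p)) i j :
  (diag_mx e *m A) i j = e 0 i * A i j.
Proof. by rewrite mul_diag_mx mxE. Qed.

Lemma diag_conjE n (e : 'rV[int]_n) (A : 'M[int]_n) i j :
  (diag_mx e *m A *m diag_mx e) i j = e 0 i * A i j * e 0 j.
Proof. by rewrite mul_mx_diag mul_diag_mx !mxE. Qed.

Section PermutationMatrices.
Variables (n : nat) (s : {perm 'I_n}).

Lemma mul_pmx_mx p (A : 'M[int]_(n, p)) i j : (pmx s *m A) i j = A ((s^-1)%g i) j.
Proof.
rewrite (mulmx_entry1 (l := (s^-1)%g i)) => [|l li]; first by rewrite mxE permKV eqxx mul1r.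
by rewrite mxE; case: eqP => [iE|_]; [rewrite iE permK eqxx in li | rewrite mul0r].
Qed.

Lemma mul_mx_pmx p (A : 'M[int]_(p, n)) i j : (A *m pmx s) i j = A i (s j).
Proof.
rewrite (mulmx_entry1 (l := s j)) => [|l lj]; first by rewrite mxE eqxx mulr1.
by rewrite mxE (negbTE lj) mulr0.
Qed.

Lemma tr_pmx : (pmx s)^T = pmx (s^-1)%g.
Proof.
by apply/matrixP => i j; rewrite !mxE [j == _]eq_sym (can2_eq (permK s) (permKV s)).
Qed.

Lemma pmxKV : pmx s *m pmx (s^-1)%g = 1%:M.
Proof. by apply/matrixP => i j; rewrite mul_pmx_mx !mxE (inj_eq (@perm_inj _ _)). Qed.

Lemma pmxK : pmx (s^-1)%g *m pmx s = 1%:M.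
Proof. by apply/matrixP => i j; rewrite mul_mx_pmx !mxE permK. Qed.

Lemma trmx_pmx_mul p q (A : 'M[int]_(n, p)) (B : 'M[int]_(n, q)) :
  (pmx s *m A)^T *m (pmx s *m B) = A^T *m B.
Proof. by rewrite trmx_mul tr_pmx mulmxA -(mulmxA A^T) pmxK mulmx1. Qed.

Lemma pmx_diag (e : 'rV[int]_n) :
  pmx s *m diag_mx e = diag_mx (\row_i e 0 ((s^-1)%g i)) *m pmx s.
Proof.
apply/matrixP => i j.
by rewrite mul_pmx_mx mul_diag_mx !mxE (can2_eq (permKV s) (permK s)) mulr_natr.
Qed.

Lemma SPP_pmx_mul p (A : 'M[int]_(n, p)) : SPP A -> SPP (pmx s *m A).
Proof.
case/SPPP => sgA rowA colA; apply/SPPP; split=> [i j|i j k|j i k]; rewrite !mul_pmx_mx.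
- exact: sgA.
- exact: rowA.
- by move=> Aij Akj; apply: (@perm_inj _ (s^-1)%g); apply: colA Aij Akj.
Qed.

Lemma ech_pmx_mul (D : 'M[int]_n) :
  SPP D -> ech (pmx s *m D) = [set i | (s^-1)%g i \in ech D].
Proof.
move=> SPP_D; rewrite !ech_SPP ?SPP_pmx_mul //.
by apply/setP => i; rewrite !inE; under eq_existsb do rewrite mul_pmx_mx.
Qed.

End PermutationMatrices.

Definition hmx n (A : 'M[int]_n) : 'M[int]_(n + n) := block_mx A 0 0 A.

Lemma hmxM n (A B : 'M[int]_n) : hmx A *m hmx B = hmx (A *m B).
Proof. by rewrite mulmx_block !mulmx0 !mul0mx !addr0 !add0r. Qed.

Lemma hmx1 n : hmx (1%:M : 'M[int]_n) = 1%:M.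
Proof. by rewrite [RHS]scalar_mx_block. Qed.

Lemma hmx_col n p (A : 'M[int]_n) (X : 'M[int]_(n + n, p)) :
  hmx A *m X = col_mx (A *m usubmx X) (A *m dsubmx X).
Proof. by rewrite -{1}(vsubmxK X) mul_block_col !mul0mx addr0 add0r. Qed.

Lemma dcoset_rel_mulr n (X : 'M[int]_(n + n, n)) P :
  signed_perm P -> dcoset_rel X (X *m P).
Proof.
move=> sp_P; exists (const_mx 1), P; split=> //; first by apply/forallP => i; rewrite mxE eqxx.
by rewrite diag_const_mx -[block_mx _ _ _ _]/(hmx _) hmx1 mul1mx.
Qed.

Lemma dcoset_rel_hpmx n (s : {perm 'I_n}) (X Y : 'M[int]_(n + n, n)) :
  dcoset_rel X Y -> dcoset_rel (hmx (pmx s) *m X) (hmx (pmx s) *m Y).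
Proof.
case=> e [P [sg_e sp_P ->]]; exists (\row_i e 0 ((s^-1)%g i)), P; split=> //.
  by apply/forallP => i; rewrite mxE; move/forallP: sg_e.
by rewrite !mulmxA -[block_mx _ _ _ _]/(hmx _) -[block_mx _ _ _ _]/(hmx _) !hmxM pmx_diag.
Qed.

Lemma Omega0_hpmx n (s : {perm 'I_n}) (X : 'M[int]_(n + n, n)) :
  Omega0 X -> Omega0 (hmx (pmx s) *m X).
Proof.
case/andP => /andP[/andP[SPP_u SPP_d] sym] /eqP rkX.
rewrite /Omega0 hmx_col col_mxKu col_mxKd !SPP_pmx_mul // !trmx_pmx_mul sym /=.
rewrite -hmx_col eqn_leq rank_leq_col /=.
apply: leq_trans (qrank_mul_le (hmx (pmx (s^-1)%g)) _).
by rewrite mulmxA hmxM pmxK hmx1 mul1mx rkX.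
Qed.

Lemma OmegaI_hpmx n (s : {perm 'I_n}) (I : {set 'I_n}) (X : 'M[int]_(n + n, n)) :
  OmegaI [set k | s k \in I] X -> OmegaI I (hmx (pmx s) *m X).
Proof.
case/andP => Omega_X /eqP echX; rewrite /OmegaI Omega0_hpmx //=.
rewrite hmx_col col_mxKd ech_pmx_mul; last by case/andP: Omega_X => /andP[/andP[]].
by apply/eqP/setP => i; rewrite echX !inE permKV.
Qed.

Section SigmaI.
Variables (n : nat) (I : {set 'I_n}).

Lemma card_le_n : (#|I| <= n)%N.
Proof. by rewrite -[X in (_ <= X)%N]card_ord max_card. Qed.

Lemma sigmaI_in k : (sigmaI I k \in I) = (k < #|I|)%N.
Proof.
rewrite /sigmaI; case: ltnP => kI; first by rewrite -mem_enum mem_nth -?cardE.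
have : (k - #|I| < size (enum (~: I)))%N.
  by rewrite -cardE ltn_subLR // cardsC card_ord.
by move/(mem_nth k); rewrite mem_enum inE => /negbTE.
Qed.

Lemma sigmaI_inj : injective (sigmaI I).
Proof.
pose s := enum I ++ enum (~: I).
have size_s : size s = n by rewrite size_cat -!cardE cardsC card_ord.
have uniq_s : uniq s.
  rewrite cat_uniq !enum_uniq andbT /=; apply/hasPn => i.
  by rewrite !mem_enum inE => /negbTE ->.
have sE k : sigmaI I k = nth k s k by rewrite nth_cat -cardE.
move=> a b; rewrite !sE (set_nth_default a b) ?size_s // => /eqP.
by rewrite nth_uniq ?size_s // => /eqP/ord_inj.
Qed.

Definition sigmaI_perm : {perm 'I_n} := perm sigmaI_inj.

Lemma pmx_sigmaI : pmx (sigmaI I) = pmx sigmaI_perm.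
Proof. by apply/matrixP => i j; rewrite !mxE permE. Qed.

Lemma sigmaI_perm_preim : [set k | sigmaI_perm k \in I] = [set k : 'I_n | (k < #|I|)%N].
Proof. by apply/setP => k; rewrite !inE permE sigmaI_in. Qed.

Lemma sigmaI_perm_inv_preim :
  [set i | (sigmaI_perm^-1)%g i \in [set k : 'I_n | (k < #|I|)%N]] = I.
Proof. by apply/setP => i; rewrite !inE -sigmaI_in -(permE sigmaI_inj) permKV. Qed.

End SigmaI.

Section StandardForm.
Variables (n m : nat) (le_mn : (m <= n)%N).
Local Notation w := (widen_ord le_mn).

Variant widen_spec (k : 'I_n) : bool -> Type :=
  | WidenIn (a : 'I_m) of k = w a : widen_spec k true
  | WidenOut of (m <= k)%N : widen_spec k false.

Lemma widenP k : widen_spec k (k < m)%N.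
Proof.
case: ltnP => [km|]; last exact: WidenOut.
by apply: (WidenIn (a := Ordinal km)); apply: ord_inj.
Qed.

Lemma widen_inj : injective w.
Proof. by move=> a b wab; apply: val_inj; exact: (congr1 val wab). Qed.

Lemma ext_ord (t : 'M[int]_m) (a b : 'I_m) : ext t a b = t a b.
Proof. by rewrite /ext !valK. Qed.

Definition blockU (t : 'M[int]_m) : 'M[int]_n :=
  \matrix_(i < n, j < n)
     (if (i < m)%N && (j < m)%N then ext t i j
      else ((m <= i)%N && (i == j :> nat))%:R).

Definition blockL : 'M[int]_n :=
  \matrix_(i < n, j < n) (((i < m)%N && (i == j :> nat))%:R).

Lemma blockM_col t : blockM n t = col_mx (blockU t) blockL.
Proof. by []. Qed.

Lemma blockU_in t (a b : 'I_m) : blockU t (w a) (w b) = t a b.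
Proof. by rewrite mxE /= !ltn_ord ext_ord. Qed.

Lemma blockU_in_out t a (j : 'I_n) : (m <= j)%N -> blockU t (w a) j = 0.
Proof. by move=> mj; rewrite mxE /= ltn_ord ltnNge mj /= leqNgt ltn_ord. Qed.

Lemma blockU_out t (k j : 'I_n) : (m <= k)%N -> blockU t k j = (k == j)%:R.
Proof. by move=> mk; rewrite mxE ltnNge mk. Qed.

Lemma blockU_out_in t (k : 'I_n) b : (m <= k)%N -> blockU t k (w b) = 0.
Proof.
move=> mk; rewrite blockU_out //; case: eqP => // kE.
by move: mk; rewrite kE leqNgt /= ltn_ord.
Qed.

Lemma blockLE (k j : 'I_n) : blockL k j = ((k < m)%N && (k == j))%:R.
Proof. by rewrite mxE. Qed.

Lemma blockL_in a (j : 'I_n) : blockL (w a) j = (w a == j)%:R.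
Proof. by rewrite blockLE /= ltn_ord. Qed.

Lemma blockL_out (k j : 'I_n) : (m <= k)%N -> blockL k j = 0.
Proof. by rewrite blockLE leqNgt => /negbTE ->. Qed.

Lemma mul_blockL_in p (A : 'M[int]_(n, p)) a j : (blockL *m A) (w a) j = A (w a) j.
Proof.
rewrite (mulmx_entry1 (l := w a)) => [|l la]; first by rewrite blockL_in eqxx mul1r.
by rewrite blockL_in eq_sym (negbTE la) mul0r.
Qed.

Lemma mul_blockL_out p (A : 'M[int]_(n, p)) (k : 'I_n) j :
  (m <= k)%N -> (blockL *m A) k j = 0.
Proof. by move=> mk; rewrite mxE big1 // => l _; rewrite blockL_out ?mul0r. Qed.

Lemma SPP_blockU t : SPP t -> SPP (blockU t).
Proof.
case/SPPP => sg_t row_t col_t; apply/SPPP; split=> [k j|k j j'|j k k'].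
- case: (widenP k) => [a ->|mk].
    case: (widenP j) => [b ->|mj]; last by rewrite blockU_in_out ?eqxx.
    by rewrite blockU_in; apply: sg_t.
  by rewrite blockU_out // natr_bool_neq0 => /eqP->; rewrite eqxx.
- case: (widenP k) => [a ->|mk]; last first.
    by rewrite !blockU_out // !natr_bool_neq0 => /eqP<- /eqP.
  case: (widenP j) => [b ->|mj]; last by rewrite blockU_in_out ?eqxx.
  case: (widenP j') => [b' ->|mj']; last by rewrite (blockU_in_out _ _ mj') eqxx.
  by rewrite !blockU_in => /row_t Etb /Etb ->.
- case: (widenP j) => [b ->|mj].
    case: (widenP k) => [a ->|mk]; last by rewrite blockU_out_in ?eqxx.
    case: (widenP k') => [a' ->|mk']; last by rewrite (blockU_out_in _ _ mk') eqxx.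
    by rewrite !blockU_in => /col_t Eta /Eta ->.
  case: (widenP k) => [a ->|mk]; first by rewrite blockU_in_out ?eqxx.
  case: (widenP k') => [a' ->|mk']; first by rewrite (blockU_in_out _ _ mj) eqxx.
  by rewrite !blockU_out // !natr_bool_neq0 => /eqP-> /eqP.
Qed.

Lemma SPP_blockL : SPP blockL.
Proof.
apply/SPPP; split=> [k j|k j j'|j k k']; rewrite !blockLE ?natr_bool_neq0.
- by move=> ->.
- by move=> /andP[_ /eqP <-] /andP[_ /eqP].
- by move=> /andP[_ /eqP ->] /andP[_ /eqP].
Qed.

Lemma blockU_trL t (i j : 'I_n) :
  ((blockU t)^T *m blockL) i j = if (j < m)%N then blockU t j i else 0.
Proof.
rewrite (mulmx_entry1 (l := j)) => [|l lj].
  by rewrite mxE blockLE eqxx andbT; case: ifP; rewrite ?mulr1 ?mulr0.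
by rewrite blockLE (negbTE lj) andbF mulr0.
Qed.

Lemma blockU_trL_sym t : t^T = t ->
  ((blockU t)^T *m blockL)^T = (blockU t)^T *m blockL.
Proof.
move=> sym_t; apply/matrixP => i j; rewrite mxE !blockU_trL.
case: (widenP i) => [a ->|mi]; case: (widenP j) => [b ->|mj] //.
- by rewrite !blockU_in -{1}sym_t mxE.
- by rewrite blockU_in_out.
- by rewrite blockU_in_out.
Qed.

Lemma qrank_blockM (t : 'M[int]_m) : qrank (blockM n t) = n.
Proof.
pose D (b : bool) := diag_mx (\row_(k < n) ((k < m)%N == b)%:R) : 'M[int]_n.
apply: (@qrank_linv _ _ (row_mx (D false) (D true))).
rewrite blockM_col mul_row_col !mul_diag_mx; apply/matrixP => k j; rewrite !mxE.
case: (widenP k) => [a ->|mk] /=; first by rewrite mul0r add0r mul1r.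
by rewrite mk mul1r mul0r addr0.
Qed.

Lemma ech_blockL : ech blockL = [set k : 'I_n | (k < m)%N].
Proof.
rewrite ech_SPP ?SPP_blockL //; apply/setP => k; rewrite !inE.
case: (widenP k) => [a ->|mk].
  by apply/existsP; exists (w a); rewrite blockL_in eqxx.
by apply/existsP => -[j]; rewrite blockL_out ?eqxx.
Qed.

Lemma OmegaI_blockM (t : 'M[int]_m) :
  SPI t -> OmegaI [set k : 'I_n | (k < m)%N] (blockM n t).
Proof.
case/andP => SPP_t /eqP sym_t.
rewrite /OmegaI /Omega0 qrank_blockM blockM_col col_mxKu col_mxKd ech_blockL.
by rewrite SPP_blockU // SPP_blockL blockU_trL_sym // !eqxx.
Qed.

Definition ext_sign (d : 'rV[int]_m) : 'rV[int]_n :=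
  \row_(k < n) if insub (k : nat) is Some a then d 0 a else 1.

Lemma ext_sign_in d a : ext_sign d 0 (w a) = d 0 a.
Proof. by rewrite mxE /= valK. Qed.

Lemma ext_sign_out d (k : 'I_n) : (m <= k)%N -> ext_sign d 0 k = 1.
Proof. by move=> mk; rewrite mxE insubF // ltnNge mk. Qed.

Lemma sign_vec_ext d : sign_vec d -> sign_vec (ext_sign d).
Proof.
move/forallP=> sg_d; apply/forallP => k.
by case: (widenP k) => [a ->|mk]; rewrite ?ext_sign_in ?ext_sign_out.
Qed.

Lemma blockM_sign_conj (t : 'M[int]_m) d : sign_vec d ->
  blockM n (diag_mx d *m t *m diag_mx d) =
  hmx (diag_mx (ext_sign d)) *m blockM n t *m diag_mx (ext_sign d).
Proof.
move/forallP=> sg_d; set e := ext_sign d.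
have e2 k : e 0 k * e 0 k = 1.
  case: (widenP k) => [a ->|mk]; last by rewrite /e ext_sign_out ?mulr1.
  by rewrite /e ext_sign_in (is_sign_sqr (sg_d a)).
rewrite !blockM_col hmx_col col_mxKu col_mxKd mul_col_mx; congr col_mx.
  apply/matrixP => k j; rewrite diag_conjE.
  case: (widenP k) => [a ->|mk]; case: (widenP j) => [b ->|mj].
  - by rewrite !blockU_in diag_conjE !ext_sign_in.
  - by rewrite !blockU_in_out ?mulr0 ?mul0r.
  - by rewrite !blockU_out_in ?mulr0 ?mul0r.
  - by rewrite !blockU_out // ?ext_sign_out // mulr1 mul1r.
apply/matrixP => k j; rewrite diag_conjE.
case: (widenP k) => [a ->|mk]; last by rewrite blockL_out ?mulr0 ?mul0r.
rewrite blockL_in; case: eqP => [<-|]; last by rewrite mulr0 mul0r.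
by rewrite mulr1 e2.
Qed.

Lemma blockM_sign_conj_dcoset (t t' : 'M[int]_m) :
  sign_conj_rel t t' -> dcoset_rel (blockM n t) (blockM n t').
Proof.
case=> d [sg_d ->]; exists (ext_sign d), (diag_mx (ext_sign d)).
by rewrite blockM_sign_conj // sign_vec_ext // signed_perm_diag // sign_vec_ext.
Qed.

Lemma blockM_dcoset_sign_conj (t t' : 'M[int]_m) :
  dcoset_rel (blockM n t) (blockM n t') -> sign_conj_rel t t'.
Proof.
case=> e [P [/forallP sg_e _]].
rewrite !blockM_col hmx_col col_mxKu col_mxKd mul_col_mx => /eq_col_mx[Ueq Leq].
have Pin a j : P (w a) j = e 0 (w a) * (w a == j)%:R.
  have := congr1 (fun M : 'M[int]_n => M (w a) j) Leq.
  rewrite /= -mulmxA diag_mulE mul_blockL_in blockL_in => ->.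
  by rewrite mulrA (is_sign_sqr (sg_e _)) mul1r.
have UPin a b : (blockU t *m P) (w a) (w b) = t a b * e 0 (w b).
  rewrite (mulmx_entry1 (l := w b)) => [|l lb].
    by rewrite blockU_in Pin eqxx mulr1.
  case: (widenP l) lb => [c -> cb|ml]; last by rewrite blockU_in_out ?mul0r.
  by rewrite Pin (negbTE cb) !mulr0.
exists (\row_a e 0 (w a)); split; first by apply/forallP => a; rewrite mxE.
apply/matrixP => a b.
by rewrite -blockU_in Ueq -mulmxA diag_mulE UPin diag_conjE !mxE mulrA.
Qed.

Section Reduction.
Variables T1 T2 : 'M[int]_n.
Hypotheses (SPP_T1 : SPP T1) (SPP_T2 : SPP T2).
Hypothesis sym_T : (T1^T *m T2)^T = T1^T *m T2.
Hypothesis rank_T : qrank (col_mx T1 T2) = n.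
Hypothesis rows_T2 : forall k, [exists j, T2 k j != 0] = (k < m)%N.

Lemma T2_out (k : 'I_n) j : (m <= k)%N -> T2 k j = 0.
Proof.
move=> mk; apply: contraTeq mk => T2kj.
by rewrite -ltnNge -rows_T2; apply/existsP; exists j.
Qed.

(* Compare the entries (j, c) and (c, j) of T1^T T2, for c the pivot of row k of T2. *)
Lemma T1_orth (k : 'I_n) j : (k < m)%N -> (forall i, T2 i j = 0) -> T1 k j = 0.
Proof.
move=> km T2j0; have /existsP[c T2kc] : [exists c, T2 k c != 0] by rewrite rows_T2.
have := congr1 (fun M : 'M[int]_n => M j c) sym_T.
rewrite /= mxE (mulmx_SPP_col _ _ _ T2kc) //.
rewrite mxE big1 => [/esym/eqP|l _]; last by rewrite T2j0 mulr0.
by rewrite mxE mulf_eq0 (negbTE T2kc) orbF => /eqP.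
Qed.

Definition redmx : 'M[int]_n := \matrix_(k, j) if (k < m)%N then T2 k j else T1 k j.

Lemma redmx_in a j : redmx (w a) j = T2 (w a) j.
Proof. by rewrite mxE /= ltn_ord. Qed.

Lemma redmx_out (k : 'I_n) j : (m <= k)%N -> redmx k j = T1 k j.
Proof. by move=> mk; rewrite mxE ltnNge mk. Qed.

Lemma redmx_col_neq0 j : exists i, redmx i j != 0.
Proof.
case: (pickP (fun i => T2 i j != 0)) => [i T2ij|T2j0].
  case: (widenP i) T2ij => [a ->|mi]; last by rewrite T2_out ?eqxx.
  by exists (w a); rewrite redmx_in.
have [i] := qrank_col_neq0 j rank_T; rewrite -(splitK i); case: (split i) => k /=.
- rewrite col_mxEu => T1kj; exists k.
  case: (widenP k) T1kj => [a ->|mk]; last by rewrite redmx_out.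
  rewrite T1_orth ?eqxx //; first exact: (ltn_ord a).
  by move=> l; apply/eqP/negbFE/T2j0.
- by rewrite col_mxEd (negbFE (T2j0 k)).
Qed.

Lemma signed_perm_redmx : signed_perm redmx.
Proof.
case/SPPP: SPP_T1 => sg_T1 row_T1 _; case/SPPP: SPP_T2 => sg_T2 row_T2 _.
apply: signed_perm_of_cols redmx_col_neq0 => [k j|k j j'].
- by case: (widenP k) => [a ->|mk]; rewrite ?redmx_in ?redmx_out //;
    [apply: sg_T2|apply: sg_T1].
- by case: (widenP k) => [a ->|mk]; rewrite ?redmx_in ?redmx_out //;
    [apply: row_T2|apply: row_T1].
Qed.

Lemma SPP_redmx : SPP redmx.
Proof. by case/andP: signed_perm_redmx. Qed.

Lemma redmx_col_uniq (k k' j : 'I_n) : redmx k j != 0 -> redmx k' j != 0 -> k = k'.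
Proof. by case/SPPP: SPP_redmx => _ _; apply. Qed.

Definition piv_col (k : 'I_n) : 'I_n := odflt k [pick j | redmx k j != 0].

Lemma redmx_piv_col k : redmx k (piv_col k) != 0.
Proof.
have /andP[_ /forallP/(_ k)/existsP[j Rkj]] := signed_perm_redmx.
by rewrite /piv_col; case: pickP => //= R0; rewrite R0 in Rkj.
Qed.

Lemma piv_colP k j : redmx k j != 0 -> j = piv_col k.
Proof. by case/SPPP: SPP_redmx => _ row_R _ /row_R; apply; apply: redmx_piv_col. Qed.

Lemma piv_col_inj : injective piv_col.
Proof. by move=> k k' E; apply: (redmx_col_uniq (redmx_piv_col k)); rewrite E redmx_piv_col. Qed.

Lemma is_sign_redmx_piv k : is_sign (redmx k (piv_col k)).
Proof. by case/SPPP: SPP_redmx => sg_R _ _; apply/sg_R/redmx_piv_col. Qed.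

Local Notation r a := (redmx (w a) (piv_col (w a))).

Lemma T1T2_piv_col x a : (T1^T *m T2) x (piv_col (w a)) = T1 (w a) x * r a.
Proof.
have T2_nz : T2 (w a) (piv_col (w a)) != 0 by rewrite -redmx_in redmx_piv_col.
by rewrite (mulmx_SPP_col _ _ _ T2_nz) // mxE redmx_in.
Qed.

Definition tau : 'M[int]_m := \matrix_(a, b) (T1 (w a) (piv_col (w b)) * r b).

Lemma SPI_tred : SPI tau.
Proof.
case/SPPP: SPP_T1 => sg_T1 row_T1 col_T1.
have tE a b : tau a b = T1 (w a) (piv_col (w b)) * r b by rewrite mxE.
have T1_nz a b : tau a b != 0 -> T1 (w a) (piv_col (w b)) != 0.
  by rewrite tE mulf_eq0 negb_or => /andP[].
apply/andP; split.
  apply/SPPP; split=> [a b|a b b'|b a a'].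
  - rewrite tE mulf_eq0 negb_or => /andP[T1_ab _].
    exact: is_signM (sg_T1 _ _ T1_ab) (is_sign_redmx_piv _).
  - by move=> /T1_nz T1_ab /T1_nz /(row_T1 _ _ _ T1_ab) /piv_col_inj /widen_inj.
  - by move=> /T1_nz T1_ab /T1_nz /(col_T1 _ _ _ T1_ab) /widen_inj.
have tM a b : tau a b = (T1^T *m T2) (piv_col (w b)) (piv_col (w a)) * (r a * r b).
  rewrite T1T2_piv_col tE mulrA -(mulrA (T1 _ _)).
  by rewrite (is_sign_sqr (is_sign_redmx_piv _)) mulr1.
have Msym x y : (T1^T *m T2) x y = (T1^T *m T2) y x by rewrite -{1}sym_T mxE.
by apply/eqP/matrixP => a b; rewrite [LHS]mxE !tM Msym [r b * _]mulrC.
Qed.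

Lemma T2_factor : T2 = blockL *m redmx.
Proof.
apply/matrixP => k j.
case: (widenP k) => [a ->|mk]; first by rewrite mul_blockL_in redmx_in.
by rewrite mul_blockL_out // T2_out.
Qed.

Lemma T1_factor : T1 = blockU tau *m redmx.
Proof.
apply/matrixP => k j; have [p Rpj] := redmx_col_neq0 j.
rewrite (mulmx_SPP_col _ _ _ Rpj) ?SPP_redmx //.
case: (widenP k) => [a ->|mk]; last first.
  rewrite blockU_out // -(redmx_out _ mk); case: eqP => [->|kp]; first by rewrite mul1r.
  have [->|Rkj] := eqVneq (redmx k j) 0; first by rewrite mul0r.
  by case: kp; apply: redmx_col_uniq Rkj Rpj.
case: (widenP p) Rpj => [b ->|mp] Rpj.
  by rewrite blockU_in mxE (piv_colP Rpj) -mulrA (is_sign_sqr (is_sign_redmx_piv _)) mulr1.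
rewrite blockU_in_out // mul0r T1_orth //; first exact: (ltn_ord a).
move=> i; case: (widenP i) => [c ->|mi]; last exact: T2_out.
apply/eqP; rewrite -redmx_in; apply: contraTT mp => /redmx_col_uniq/(_ Rpj) <-.
by rewrite -ltnNge; exact: (ltn_ord c).
Qed.

Lemma col_mx_factor : col_mx T1 T2 = blockM n tau *m redmx.
Proof. by rewrite blockM_col mul_col_mx -T1_factor -T2_factor. Qed.

End Reduction.

Lemma blockM_dcoset_surj (X : 'M[int]_(n + n, n)) :
  OmegaI [set k : 'I_n | (k < m)%N] X ->
  exists2 t : 'M[int]_m, SPI t & dcoset_rel (blockM n t) X.
Proof.
case/andP => /andP[/andP[/andP[SPP_u SPP_d] /eqP sym] /eqP rk] /eqP echX.
have rows k : [exists j, dsubmx X k j != 0] = (k < m)%N.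
  by move/setP/(_ k): echX; rewrite ech_SPP // !inE.
rewrite -(vsubmxK X) in rk *.
exists (tau (usubmx X) (dsubmx X)); first exact: SPI_tred.
rewrite col_mx_factor //; apply: dcoset_rel_mulr; exact: signed_perm_redmx.
Qed.

End StandardForm.

Theorem proposition5p3 (n : nat) (I : {set 'I_n}) :
  (* well-defined: lands in Omega^I_n and is constant on Z_2^m-orbits *)
  (forall t : 'M[int]_#|I|, SPI t -> OmegaI I (PhiI t)) /\
  (forall t t' : 'M[int]_#|I|, SPI t -> SPI t' ->
     sign_conj_rel t t' -> dcoset_rel (PhiI t) (PhiI t')) /\
  (* injective on orbits *)
  (forall t t' : 'M[int]_#|I|, SPI t -> SPI t' ->
     dcoset_rel (PhiI t) (PhiI t') -> sign_conj_rel t t') /\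
  (* surjective on double cosets *)
  (forall X : 'M[int]_(n + n, n), OmegaI I X ->
     exists2 t : 'M[int]_#|I|, SPI t & dcoset_rel (PhiI t) X).
Proof.
set s := sigmaI_perm I; have le_mn := card_le_n I.
have PhiE (t : 'M[int]_#|I|) : PhiI t = hmx (pmx s) *m blockM n t.
  by rewrite /PhiI pmx_sigmaI.
split; [|split; [|split]].
- move=> t SPI_t; rewrite PhiE; apply: OmegaI_hpmx.
  by rewrite sigmaI_perm_preim; apply: OmegaI_blockM.
- move=> t t' _ _ /(blockM_sign_conj_dcoset le_mn); rewrite !PhiE.
  exact: dcoset_rel_hpmx.
- move=> t t' _ _; rewrite !PhiE => /(dcoset_rel_hpmx (s^-1)%g).
  rewrite !mulmxA !hmxM pmxK hmx1 !mul1mx; exact: blockM_dcoset_sign_conj.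
- move=> X OmegaI_X.
  have : OmegaI [set k : 'I_n | (k < #|I|)%N] (hmx (pmx (s^-1)%g) *m X).
    by apply: OmegaI_hpmx; rewrite sigmaI_perm_inv_preim.
  case/(blockM_dcoset_surj le_mn) => t SPI_t /(dcoset_rel_hpmx s).
  by rewrite mulmxA hmxM pmxKV hmx1 mul1mx -PhiE; exists t.
Qed.
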